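(* Let $g(x)=\sum_{k=0}^\infty a_k x^k$ be a real power series convergent for $x\in(-\varrho,\varrho)$, some $\varrho\in(0,\infty)$, and put $G(y)=g(1/y)$. Then for every real $y>1+\max\{1,1/\varrho\}$, $$(y+1)G(y)-yG(y-1)=a_0-\sum_{k=2}^\infty \frac{\sum_{i=1}^{k-1}\binom{k}{i-1}a_i+\bigl(\binom{k}{k-1}-1\bigr)a_k}{y^k},$$ the series being convergent. Consequently $\lim_{y\to\infty}\bigl((y+1)G(y)-yG(y-1)\bigr)=a_0$. In particular, $\lim_{y\to\infty}\Bigl(\frac{(y+1)^{y+1}}{y^y}-\frac{y^y}{(y-1)^{y-1}}\Bigr)=\mathrm{e}$.
   Context: $\mathrm{e}$ is the base of the natural logarithm; the special case corresponds to $g(x)=(1+x)^{1/x}$ (with value $\mathrm{e}$ at $0$), whose Maclaurin series converges on $(-1,1)$ and has constant term $\mathrm{e}$, so that $G(y)=(1+1/y)^y$. *)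

From Stdlib Require Import Reals.
Open Scope R_scope.

Definition G (g : R -> R) (y : R) : R := g (/ y).

(* Numerator of the k-th term, for k >= 2:
   sum_{i=1}^{k-1} C(k,i-1) a_i + (C(k,k-1) - 1) a_k.
   Written with j = i-1 ranging over 0..k-2. *)
Definition coef (a : nat -> R) (k : nat) : R :=
  sum_f_R0 (fun j => C k j * a (S j)) (k - 2) + (C k (k - 1) - 1) * a k.

Definition lim_at_infty (f : R -> R) (l : R) : Prop :=
  forall eps : R, eps > 0 -> exists M : R, forall y : R, y > M -> Rabs (f y - l) < eps.

From Stdlib Require Import Reals Lra Lia.
From Coquelicot Require Import Hierarchy Derive AutoDerive.
Open Scope R_scope.

(* Put t = 1/y and u = 1/(y-1), so that u = t + t u.  Then y u^(j+1) = sum_k C(k,j) t^k, hence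
   y (g(u) - a_0) = sum_j a_(j+1) y u^(j+1) is a double series in t; summing it by rows gives
   sum_k t^k sum_j C(k,j) a_(j+1), and comparing with (y+1) g(t) term by term yields the
   identity.  Rows may be summed first because the tails E_j(N) of sum_k C(k,j) t^k are
   nonnegative and satisfy Pascal-type recurrences, so that their weighted sums
   sum_j s^j E_j(N) decay geometrically in N.
   The limit a_0 follows from g(x) = a_0 + a_1 x + O(x^2).  For the special case, the mean
   value theorem applies to F(y) = (y+1)^(y+1)/y^y, whose derivative F(c) ln(1 + 1/c) lies
   within e/c of e. *)

(** * Power series near the origin *)

Lemma Un_cv_const (c : R) : Un_cv (fun _ => c) c.
Proof.
  intros eps Heps. exists 0%nat. intros n _.
  unfold Rdist. rewrite Rminus_diag, Rabs_R0. lra.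
Qed.

Lemma sum_f_R0_mult_l (f : nat -> R) c N :
  sum_f_R0 (fun i => c * f i) N = c * sum_f_R0 f N.
Proof. induction N as [|N IH]; simpl; [ring|]. rewrite IH. ring. Qed.

Lemma infinite_sum_terms_bounded f l :
  infinite_sum f l -> exists B, forall n, Rabs (f n) <= B.
Proof.
  intros Hf.
  destruct (cauchy_bound _ (CV_Cauchy _ (exist _ _ (cv_cvabs _ _ Hf)))) as [M HM].
  assert (HS : forall n, Rabs (sum_f_R0 f n) <= M) by (intros n; apply HM; exists n; reflexivity).
  exists (2 * M). intros [|n].
  - specialize (HS 0%nat). simpl in HS. pose proof (Rabs_pos (f 0%nat)). lra.
  - replace (f (S n)) with (sum_f_R0 f (S n) + - sum_f_R0 f n) by (simpl; ring).
    eapply Rle_trans; [apply Rabs_triang|]. rewrite Rabs_Ropp.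
    pose proof (HS (S n)). pose proof (HS n). lra.
Qed.

Lemma power_series_coef_bound (a : nat -> R) r l :
  0 < r -> infinite_sum (fun k => a k * r ^ k) l ->
  exists B, 0 <= B /\ forall k, Rabs (a k) * r ^ k <= B.
Proof.
  intros Hr Hl. destruct (infinite_sum_terms_bounded _ _ Hl) as [B HB].
  assert (Hk : forall k, Rabs (a k) * r ^ k <= B).
  { intros k. specialize (HB k).
    rewrite Rabs_mult, <- RPow_abs, (Rabs_right r) in HB by lra. exact HB. }
  exists B. split; [|exact Hk].
  eapply Rle_trans; [|apply (Hk 0%nat)]. simpl. rewrite Rmult_1_r. apply Rabs_pos.
Qed.

Lemma sum_pow_le_2 h N : 0 <= h <= 1/2 -> sum_f_R0 (fun k => h ^ k) N <= 2.
Proof.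
  intros Hh. rewrite tech3 by lra.
  assert (0 <= h ^ S N) by (apply pow_le; lra).
  apply Rmult_le_reg_r with (1 - h); [lra|].
  unfold Rdiv. rewrite Rmult_assoc, Rinv_l by lra. lra.
Qed.

Lemma power_series_remainder_bound (a : nat -> R) f r B x :
  0 < r -> (forall k, Rabs (a k) * r ^ k <= B) ->
  infinite_sum (fun k => a k * x ^ k) f -> Rabs x <= r / 2 ->
  Rabs (f - a 0%nat - a 1%nat * x) <= 2 * B / r ^ 2 * x ^ 2.
Proof.
  intros Hr HB Hf Hx.
  set (h := Rabs x / r).
  assert (Hh : 0 <= h <= 1/2).
  { unfold h, Rdiv.
    split; [apply Rmult_le_pos; [apply Rabs_pos | left; apply Rinv_0_lt_compat; lra]|].
    apply Rmult_le_reg_r with r; [lra|]. rewrite Rmult_assoc, Rinv_l by lra. lra. }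
  assert (HB0 : 0 <= B).
  { eapply Rle_trans; [|apply (HB 0%nat)]. simpl. rewrite Rmult_1_r. apply Rabs_pos. }
  assert (Hterm : forall k, Rabs (a k * x ^ k) <= B * h ^ k).
  { intros k. rewrite Rabs_mult, <- RPow_abs.
    replace (Rabs x) with (r * h) by (unfold h; field; lra).
    rewrite Rpow_mult_distr, <- Rmult_assoc.
    apply Rmult_le_compat_r; [apply pow_le; lra | apply HB]. }
  assert (Hh2 : h ^ 2 = x ^ 2 / r ^ 2).
  { rewrite <- (pow2_abs x). replace (Rabs x) with (r * h) by (unfold h; field; lra).
    field. lra. }
  assert (Htail : forall N, Rabs (sum_f_R0 (fun k => a (k + 2)%nat * x ^ (k + 2)) N)
                            <= 2 * B / r ^ 2 * x ^ 2).
  { intros N. eapply Rle_trans; [apply sum_f_R0_triangle|].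
    eapply Rle_trans; [apply sum_Rle; intros k _; apply Hterm|].
    rewrite (sum_eq _ (fun k => (B * h ^ 2) * h ^ k))
      by (intros k _; rewrite pow_add; ring).
    rewrite sum_f_R0_mult_l.
    apply Rle_trans with ((B * h ^ 2) * 2).
    - apply Rmult_le_compat_l; [apply Rmult_le_pos; [lra | apply pow_le; lra]|].
      apply sum_pow_le_2, Hh.
    - rewrite Hh2. right. field. lra. }
  assert (Hcv : Un_cv (fun N => sum_f_R0 (fun k => a (k + 2)%nat * x ^ (k + 2)) N)
                      (f - a 0%nat - a 1%nat * x)).
  { apply Un_cv_ext with (fun N => sum_f_R0 (fun k => a k * x ^ k) (N + 2) - a 0%nat - a 1%nat * x).
    - intros N. induction N as [|N IH].
      + simpl. ring.
      + rewrite tech5, <- IH. replace (S N + 2)%nat with (S (N + 2)) by lia.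
        rewrite tech5. ring.
    - apply CV_minus; [apply CV_minus; [apply CV_shift', Hf |] |]; apply Un_cv_const. }
  apply Rle_cv_lim with (1 := Htail); [apply cv_cvabs, Hcv | apply Un_cv_const].
Qed.

(** * The limit a_0 *)

Lemma G_difference_sub_a0 (a : nat -> R) g y : 1 < y ->
  (y + 1) * G g y - y * G g (y - 1) - a 0%nat =
  (y + 1) * (g (/ y) - a 0%nat - a 1%nat * / y)
  - y * (g (/ (y - 1)) - a 0%nat - a 1%nat * / (y - 1))
  - a 1%nat * (/ y * / (y - 1)).
Proof. intros Hy. unfold G. field. lra. Qed.

Lemma G_difference_bound (a : nat -> R) g K y : 0 <= K -> 2 <= y ->
  Rabs (g (/ y) - a 0%nat - a 1%nat * / y) <= K * (/ y) ^ 2 ->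
  Rabs (g (/ (y - 1)) - a 0%nat - a 1%nat * / (y - 1)) <= K * (/ (y - 1)) ^ 2 ->
  Rabs ((y + 1) * G g y - y * G g (y - 1) - a 0%nat) <= (6 * K + Rabs (a 1%nat)) / y.
Proof.
  intros HK Hy Ht Hu. rewrite G_difference_sub_a0 by lra.
  set (t := / y) in *. set (u := / (y - 1)) in *.
  assert (Hyt : y * t = 1) by (unfold t; field; lra).
  assert (Hyu : (y - 1) * u = 1) by (unfold u; field; lra).
  assert (Ht0 : 0 < t) by (unfold t; apply Rinv_0_lt_compat; lra).
  assert (Hu0 : 0 < u) by (unfold u; apply Rinv_0_lt_compat; lra).
  assert (Hut : u <= 2 * t) by nra.
  assert (Hu1 : u <= 1) by nra.
  replace ((6 * K + Rabs (a 1%nat)) / y) with (2 * K * t + 4 * K * t + Rabs (a 1%nat) * t)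
    by (unfold t; field; lra).
  unfold Rminus at 1 2. eapply Rle_trans; [apply Rabs_triang|].
  rewrite Rabs_Ropp. apply Rplus_le_compat.
  - eapply Rle_trans; [apply Rabs_triang|]. rewrite Rabs_Ropp, !Rabs_mult.
    rewrite (Rabs_right (y + 1)), (Rabs_right y) by lra.
    apply Rplus_le_compat.
    + apply Rle_trans with ((y + 1) * (K * t ^ 2)); [apply Rmult_le_compat_l; lra|].
      assert ((y + 1) * t <= 2) by nra.
      replace ((y + 1) * (K * t ^ 2)) with ((K * t) * ((y + 1) * t)) by ring.
      replace (2 * K * t) with ((K * t) * 2) by ring.
      apply Rmult_le_compat_l; nra.
    + apply Rle_trans with (y * (K * u ^ 2)); [apply Rmult_le_compat_l; lra|].
      assert (y * u <= 2) by nra.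
      replace (y * (K * u ^ 2)) with ((K * u) * (y * u)) by ring.
      apply Rle_trans with ((K * u) * 2); [apply Rmult_le_compat_l; nra | nra].
  - rewrite Rabs_mult, (Rabs_right (t * u)) by nra.
    apply Rmult_le_compat_l; [apply Rabs_pos | nra].
Qed.

Lemma G_difference_lim (a : nat -> R) rho g : 0 < rho ->
  (forall x, Rabs x < rho -> infinite_sum (fun k => a k * x ^ k) (g x)) ->
  lim_at_infty (fun y => (y + 1) * G g y - y * G g (y - 1)) (a 0%nat).
Proof.
  intros Hrho Hg. set (r := rho / 2).
  assert (Hr : 0 < r) by (unfold r; lra).
  destruct (power_series_coef_bound a r (g r) Hr
              (Hg r ltac:(rewrite Rabs_right; unfold r; lra))) as [B [HB0 HB]].
  set (K := 2 * B / r ^ 2).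
  assert (HK : 0 <= K).
  { unfold K, Rdiv. apply Rmult_le_pos; [lra | left; apply Rinv_0_lt_compat, pow_lt, Hr]. }
  assert (Hrem : forall x, 0 < x <= r / 2 ->
            Rabs (g x - a 0%nat - a 1%nat * x) <= K * x ^ 2).
  { intros x Hx. apply (power_series_remainder_bound a (g x) r B x Hr HB);
      [apply Hg |]; rewrite Rabs_right; unfold r in *; lra. }
  set (c := 6 * K + Rabs (a 1%nat) + 1).
  assert (Hc : 0 < c) by (unfold c; pose proof (Rabs_pos (a 1%nat)); lra).
  intros eps Heps. exists (2 + 2 / r + c / eps). intros y Hy.
  assert (H2r : 0 < 2 / r) by (apply Rdiv_lt_0_compat; lra).
  assert (Hce : 0 < c / eps) by (apply Rdiv_lt_0_compat; lra).
  assert (Hinv : forall z, 2 / r <= z -> 0 < / z <= r / 2).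
  { intros z Hz. split; [apply Rinv_0_lt_compat; lra|].
    apply Rmult_le_reg_l with z; [lra|]. rewrite Rinv_r by lra.
    apply Rmult_le_reg_l with (2 / r); [lra|].
    replace (2 / r * (z * (r / 2))) with z by (field; lra). lra. }
  eapply Rle_lt_trans.
  { apply G_difference_bound; [exact HK | lra | apply Hrem, Hinv; lra | apply Hrem, Hinv; lra]. }
  apply Rle_lt_trans with (c / y).
  { unfold Rdiv. apply Rmult_le_compat_r; [left; apply Rinv_0_lt_compat; lra | unfold c; lra]. }
  apply Rmult_lt_reg_r with (y / eps); [apply Rdiv_lt_0_compat; lra|].
  replace (c / y * (y / eps)) with (c / eps) by (field; lra).
  replace (eps * (y / eps)) with y by (field; lra). lra.
Qed.

(** * Summing the binomial double series by rows *)

Lemma geometric_recursion_bound (v : nat -> R) w q c :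
  0 <= w < 1 -> 0 <= q < 1 -> 0 <= c ->
  (forall N, v (S N) = w * v N + c * q ^ S N) ->
  exists A m, 0 <= m < 1 /\ forall N, v N <= A * m ^ N.
Proof.
  intros Hw Hq Hc Hrec.
  set (m := (1 + Rmax w q) / 2).
  assert (Hm : w < m /\ q < m /\ m < 1).
  { pose proof (Rmax_l w q). pose proof (Rmax_r w q).
    assert (Rmax w q < 1) by (apply Rmax_lub_lt; lra). unfold m. lra. }
  set (A := Rmax (v 0%nat) (c / (m - w))).
  exists A, m. split; [lra|].
  assert (HA : c <= A * (m - w)).
  { apply Rle_trans with ((c / (m - w)) * (m - w)); [right; field; lra|].
    apply Rmult_le_compat_r; [lra | apply Rmax_r]. }
  assert (HAm : c * m <= A * (m - w)) by nra.
  induction N as [|N IH].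
  - simpl. rewrite Rmult_1_r. apply Rmax_l.
  - rewrite Hrec.
    assert (q ^ S N <= m ^ S N) by (apply pow_incr; lra).
    assert (0 <= m ^ N) by (apply pow_le; lra).
    apply Rle_trans with (w * (A * m ^ N) + c * m ^ S N).
    + apply Rplus_le_compat; apply Rmult_le_compat_l; lra.
    + simpl. nra.
Qed.

Lemma Un_cv_0_geometric_dom (x : nat -> R) K m : 0 <= m < 1 ->
  (forall N, Rabs (x N) <= K * m ^ N) -> Un_cv x 0.
Proof.
  intros Hm Hx eps Heps.
  assert (HK : 0 <= K).
  { specialize (Hx 0%nat). simpl in Hx. pose proof (Rabs_pos (x 0%nat)). lra. }
  destruct (pow_lt_1_zero m ltac:(rewrite Rabs_right; lra) (eps / (K + 1)))
    as [N HN]; [apply Rdiv_lt_0_compat; lra|].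
  exists N. intros n Hn. unfold Rdist. rewrite Rminus_0_r.
  specialize (HN n Hn). rewrite Rabs_right in HN by (apply Rle_ge, pow_le; lra).
  assert (0 <= m ^ n) by (apply pow_le; lra).
  apply Rle_lt_trans with ((K + 1) * m ^ n); [eapply Rle_trans; [apply Hx | nra]|].
  apply Rmult_lt_compat_l with (r := K + 1) in HN; [|lra].
  replace ((K + 1) * (eps / (K + 1))) with eps in HN by (field; lra). exact HN.
Qed.

(* Unlike [C n k], which is meaningless for [k > n], this vanishes there, which makes Pascal's
   rule hold without side conditions. *)
Fixpoint binom (n k : nat) : nat :=
  match n, k with
  | _, O => 1%nat
  | O, S _ => 0%nat
  | S n', S k' => (binom n' k' + binom n' (S k'))%nat
  end.

Lemma binom_0_r n : binom n 0 = 1%nat.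
Proof. destruct n; reflexivity. Qed.

Lemma binom_small n k : (n < k)%nat -> binom n k = 0%nat.
Proof.
  revert k; induction n as [|n IH]; intros [|k] Hk; simpl; try lia; try reflexivity.
  rewrite !IH by lia. reflexivity.
Qed.

Lemma binom_diag n : binom n n = 1%nat.
Proof.
  induction n as [|n IH]; simpl; [reflexivity|].
  rewrite IH, binom_small by lia. reflexivity.
Qed.

Lemma binom_succ_pred n : binom (S n) n = S n.
Proof.
  induction n as [|n IH]; [reflexivity|].
  change (binom (S (S n)) (S n)) with (binom (S n) n + binom (S n) (S n))%nat.
  rewrite IH, binom_diag. lia.
Qed.

Lemma INR_binom n k : (k <= n)%nat -> INR (binom n k) = C n k.
Proof.
  assert (HC0 : forall m, C m 0 = 1).
  { intros m. unfold C. rewrite Nat.sub_0_r. simpl. field. apply INR_fact_neq_0. }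
  assert (HCm : forall m, C m m = 1).
  { intros m. unfold C. rewrite Nat.sub_diag. simpl. field. apply INR_fact_neq_0. }
  revert k; induction n as [|n IH]; intros [|k] Hk; try lia; try (rewrite HC0; reflexivity).
  simpl binom. rewrite plus_INR.
  destruct (Nat.eq_dec k n) as [->|Hkn].
  - rewrite binom_diag, binom_small, HCm by lia. simpl. ring.
  - rewrite !IH by lia. apply pascal. lia.
Qed.

Definition binomial_transform (b : nat -> R) (k : nat) : R :=
  sum_f_R0 (fun j => INR (binom k j) * b j) k.

Section BinomialSeries.

Variable t : R.

Definition binom_psum (j N : nat) : R := sum_f_R0 (fun k => INR (binom k j) * t ^ k) N.

Lemma binom_psum_0_succ N : binom_psum 0 (S N) = 1 + t * binom_psum 0 N.
Proof.
  unfold binom_psum. rewrite decomp_sum by lia. simpl pred. rewrite scal_sum.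
  f_equal; [simpl; ring|]. apply sum_eq. intros i _. rewrite !binom_0_r. simpl. ring.
Qed.

Lemma binom_psum_succ_succ j N :
  binom_psum (S j) (S N) = t * binom_psum j N + t * binom_psum (S j) N.
Proof.
  unfold binom_psum. rewrite decomp_sum by lia. simpl pred. rewrite !scal_sum, <- sum_plus.
  simpl binom at 1. simpl INR at 1. rewrite Rmult_0_l, Rplus_0_l.
  apply sum_eq. intros i _. simpl binom. rewrite plus_INR. simpl pow. ring.
Qed.

Lemma binom_psum_small N : binom_psum (S N) N = 0.
Proof.
  unfold binom_psum. rewrite (sum_eq _ (fun _ => 0)).
  - rewrite sum_cte. ring.
  - intros i Hi. rewrite binom_small by lia. simpl. ring.
Qed.

Lemma sum_binomial_transform_swap (b : nat -> R) N :
  sum_f_R0 (fun k => t ^ k * binomial_transform b k) N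
  = sum_f_R0 (fun j => b j * binom_psum j N) N.
Proof.
  unfold binomial_transform.
  induction N as [|N IH]; [unfold binom_psum; simpl; ring|].
  rewrite tech5, IH, (tech5 (fun j => b j * binom_psum j (S N))).
  rewrite (sum_eq (fun j => b j * binom_psum j (S N))
             (fun j => b j * binom_psum j N + t ^ S N * (INR (binom (S N) j) * b j)))
    by (intros i _; unfold binom_psum; rewrite tech5; ring).
  rewrite sum_plus, sum_f_R0_mult_l. unfold binom_psum at 3.
  rewrite (tech5 (fun k => INR (binom k (S N)) * t ^ k)). fold (binom_psum (S N) N).
  rewrite (tech5 (fun j => INR (binom (S N) j) * b j)), binom_psum_small, binom_diag.
  change (INR 1) with 1. ring.
Qed.

Variables y u : R.
Hypothesis Hyt : y * t = 1.
Hypothesis Hut : u = t + t * u.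

(* [y * u ^ S j] is the full sum of [binom k j * t ^ k] over [k], as [u = t / (1 - t)]. *)
Definition binom_tail (j N : nat) : R := y * u ^ S j - binom_psum j N.

Lemma yu_eq : y * u = 1 + u.
Proof.
  rewrite Hut at 1. replace (y * (t + t * u)) with ((y * t) * (1 + u)) by ring.
  rewrite Hyt. ring.
Qed.

Lemma binom_tail_0_succ N : binom_tail 0 (S N) = t * binom_tail 0 N.
Proof.
  unfold binom_tail. rewrite binom_psum_0_succ. simpl pow. rewrite Rmult_1_r, yu_eq.
  rewrite Hut at 1. ring.
Qed.

Lemma binom_tail_succ_succ j N :
  binom_tail (S j) (S N) = t * binom_tail j N + t * binom_tail (S j) N.
Proof.
  unfold binom_tail. rewrite binom_psum_succ_succ.
  replace (y * u ^ S (S j)) with (y * u ^ S j * u) by (simpl; ring).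
  rewrite Hut at 2. simpl. ring.
Qed.

Lemma binom_tail_diag N : binom_tail (S N) N = y * u ^ S (S N).
Proof. unfold binom_tail. rewrite binom_psum_small. ring. Qed.

Hypothesis Ht : 0 < t.
Hypothesis Hu : 0 < u.

Lemma binom_tail_ge0 N j : 0 <= binom_tail j N.
Proof.
  revert j; induction N as [|N IH]; intros [|j].
  - unfold binom_tail, binom_psum. simpl. rewrite Rmult_1_r, yu_eq. lra.
  - unfold binom_tail, binom_psum. cbn [sum_f_R0 binom INR]. rewrite Rmult_0_l, Rminus_0_r.
    left. apply Rmult_lt_0_compat; [nra | apply pow_lt; lra].
  - rewrite binom_tail_0_succ. specialize (IH 0%nat). nra.
  - rewrite binom_tail_succ_succ. pose proof (IH j). pose proof (IH (S j)). nra.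
Qed.

Definition weighted_tail (s : R) (N : nat) : R :=
  sum_f_R0 (fun j => s ^ j * binom_tail j N) N.

Lemma weighted_tail_succ s N :
  weighted_tail s (S N) = t * (1 + s) * weighted_tail s N + u * (s * u) ^ S N.
Proof.
  unfold weighted_tail. rewrite decomp_sum by lia. simpl pred.
  rewrite binom_tail_0_succ.
  rewrite (sum_eq _ (fun i => (s * t) * (s ^ i * binom_tail i N)
                              + t * (s ^ S i * binom_tail (S i) N)))
    by (intros i _; rewrite binom_tail_succ_succ; simpl; ring).
  rewrite sum_plus, !sum_f_R0_mult_l.
  assert (Hshift : sum_f_R0 (fun i => s ^ S i * binom_tail (S i) N) N =
     sum_f_R0 (fun j => s ^ j * binom_tail j N) N - binom_tail 0 N
     + s ^ S N * binom_tail (S N) N).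
  { pose proof (decomp_sum (fun j => s ^ j * binom_tail j N) (S N) ltac:(lia)) as D.
    simpl pred in D. rewrite tech5 in D. simpl pow in D at 1. lra. }
  rewrite Hshift, binom_tail_diag.
  replace (y * u ^ S (S N)) with ((y * t) * u ^ S (S N) / t) by (field; lra).
  rewrite Hyt, Rpow_mult_distr. simpl pow. field. lra.
Qed.

Lemma row_summation (b : nat -> R) s K :
  0 < s -> s * u < 1 -> (forall j, Rabs (b j) <= K * s ^ j) ->
  Un_cv (fun N => y * sum_f_R0 (fun j => b j * u ^ S j) N
                  - sum_f_R0 (fun k => t ^ k * binomial_transform b k) N) 0.
Proof.
  intros Hs Hsu Hb.
  assert (HK : 0 <= K).
  { specialize (Hb 0%nat). simpl in Hb. pose proof (Rabs_pos (b 0%nat)). lra. }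
  assert (Hw : 0 <= t * (1 + s) < 1).
  { split; [nra|]. apply Rmult_lt_reg_r with u; [exact Hu|].
    replace (t * (1 + s) * u) with (t * u + t * (s * u)) by ring. nra. }
  destruct (geometric_recursion_bound (weighted_tail s) (t * (1 + s)) (s * u) u Hw
              ltac:(nra) ltac:(lra) (weighted_tail_succ s)) as [A [m [Hm HA]]].
  apply (Un_cv_0_geometric_dom _ (K * A) m Hm). intros N.
  rewrite sum_binomial_transform_swap, <- sum_f_R0_mult_l, <- minus_sum.
  rewrite (sum_eq _ (fun j => b j * binom_tail j N))
    by (intros j _; unfold binom_tail; ring).
  eapply Rle_trans; [apply sum_f_R0_triangle|].
  apply Rle_trans with (K * weighted_tail s N).
  - unfold weighted_tail. rewrite <- sum_f_R0_mult_l. apply sum_Rle. intros j _.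
    rewrite Rabs_mult, (Rabs_right (binom_tail j N)) by (apply Rle_ge, binom_tail_ge0).
    rewrite <- Rmult_assoc. apply Rmult_le_compat_r; [apply binom_tail_ge0 | apply Hb].
  - rewrite Rmult_assoc. apply Rmult_le_compat_l; [exact HK | apply HA].
Qed.

End BinomialSeries.

(** * The series identity *)

Definition pow_psum (a : nat -> R) (x : R) (N : nat) : R :=
  sum_f_R0 (fun k => a k * x ^ k) N.

Lemma coef_div_pow (a : nat -> R) t m : 0 < t ->
  coef a (m + 2) / (/ t) ^ (m + 2) =
  t ^ (m + 2) * binomial_transform (fun j => a (S j)) (m + 2)
  - a (m + 2)%nat * t ^ (m + 2) - / t * (a (m + 3)%nat * t ^ (m + 3)).
Proof.
  intros Ht. unfold coef, binomial_transform.
  replace (m + 2 - 2)%nat with m by lia. replace (m + 2 - 1)%nat with (S m) by lia.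
  replace (m + 2)%nat with (S (S m)) by lia. replace (m + 3)%nat with (S (S (S m))) by lia.
  rewrite (tech5 _ (S m)), (tech5 _ m).
  rewrite (sum_eq (fun j => INR (binom (S (S m)) j) * a (S j)) (fun j => C (S (S m)) j * a (S j)))
    by (intros i Hi; rewrite INR_binom by lia; reflexivity).
  rewrite <- (INR_binom (S (S m)) (S m)) by lia.
  rewrite binom_diag, binom_succ_pred, pow_inv. change (INR 1) with 1. simpl pow.
  field. split; [lra | apply pow_nonzero; lra].
Qed.

Lemma coef_series_partial_sum (a : nat -> R) t n : 0 < t ->
  sum_f_R0 (fun m => coef a (m + 2) / (/ t) ^ (m + 2)) n =
  sum_f_R0 (fun k => t ^ k * binomial_transform (fun j => a (S j)) k) (n + 2)
  - pow_psum a t (n + 2) - / t * pow_psum a t (n + 3) + a 0%nat + / t * a 0%nat.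
Proof.
  intros Ht. unfold pow_psum. induction n as [|n IH].
  - transitivity (coef a (0 + 2) / (/ t) ^ (0 + 2)); [reflexivity|].
    rewrite coef_div_pow by exact Ht.
    unfold binomial_transform. simpl. field. lra.
  - rewrite tech5, IH, coef_div_pow by exact Ht.
    replace (S n + 2)%nat with (S (n + 2)) by lia.
    replace (S n + 3)%nat with (S (n + 3)) by lia.
    rewrite !(tech5 _ (n + 2)), (tech5 _ (n + 3)). ring.
Qed.

Lemma power_series_binomial_rows (a : nat -> R) rho g t u y :
  (forall x, Rabs x < rho -> infinite_sum (fun k => a k * x ^ k) (g x)) ->
  0 < t -> 0 < u -> u < rho -> y * t = 1 -> u = t + t * u ->
  Un_cv (fun N => sum_f_R0 (fun k => t ^ k * binomial_transform (fun j => a (S j)) k) N)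
        (y * (g u - a 0%nat)).
Proof.
  intros Hg Ht Hu Hur Hyt Hut.
  set (r := (u + rho) / 2).
  assert (Hr : u < r < rho) by (unfold r; lra).
  destruct (power_series_coef_bound a r (g r) ltac:(lra)
              (Hg r ltac:(rewrite Rabs_right; lra))) as [B [_ HB]].
  set (s := / r).
  assert (Hs : 0 < s) by (apply Rinv_0_lt_compat; lra).
  assert (Hsu : s * u < 1).
  { apply Rmult_lt_reg_l with r; [lra|]. unfold s. rewrite <- Rmult_assoc, Rinv_r by lra. lra. }
  assert (Hb : forall j, Rabs (a (S j)) <= B * s * s ^ j).
  { intros j. replace (B * s * s ^ j) with (B * s ^ S j) by (simpl; ring).
    apply Rle_trans with (Rabs (a (S j)) * r ^ S j * s ^ S j).
    - right. unfold s. rewrite pow_inv. field. apply pow_nonzero. lra.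
    - apply Rmult_le_compat_r; [apply pow_le; lra | apply HB]. }
  assert (Hgu : Un_cv (fun N => pow_psum a u (S N)) (g u)).
  { apply Un_cv_ext with (fun N => pow_psum a u (N + 1)); [intros N; f_equal; lia|].
    apply CV_shift', Hg. rewrite Rabs_right; lra. }
  pose proof (row_summation t y u Hyt Hut Ht Hu _ _ _ Hs Hsu Hb) as Hdiff.
  pose proof (CV_minus _ _ _ _
                (CV_mult _ _ _ _ (Un_cv_const y) (CV_minus _ _ _ _ Hgu (Un_cv_const (a 0%nat))))
                Hdiff) as Hlim.
  rewrite Rminus_0_r in Hlim. apply Un_cv_ext with (2 := Hlim). intros N.
  unfold pow_psum. rewrite decomp_sum by lia. simpl pred. rewrite pow_O. ring.
Qed.

Lemma G_difference_series (a : nat -> R) rho g : 0 < rho ->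
  (forall x, Rabs x < rho -> infinite_sum (fun k => a k * x ^ k) (g x)) ->
  forall y, y > 1 + Rmax 1 (/ rho) ->
  exists S, infinite_sum (fun n => coef a (n + 2) / y ^ (n + 2)) S /\
            (y + 1) * G g y - y * G g (y - 1) = a 0%nat - S.
Proof.
  intros Hrho Hg y Hy.
  assert (Hy2 : 2 < y) by (pose proof (Rmax_l 1 (/ rho)); lra).
  assert (Hyr : / rho < y - 1) by (pose proof (Rmax_r 1 (/ rho)); lra).
  set (t := / y). set (u := / (y - 1)).
  assert (Ht : 0 < t) by (apply Rinv_0_lt_compat; lra).
  assert (Hu : 0 < u) by (apply Rinv_0_lt_compat; lra).
  assert (Hyt : y * t = 1) by (unfold t; field; lra).
  assert (Hty : / t = y) by (unfold t; apply Rinv_inv).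
  assert (Hut : u = t + t * u) by (unfold t, u; field; lra).
  assert (Hur : u < rho).
  { unfold u. rewrite <- (Rinv_inv rho). apply Rinv_lt_contravar; [|lra].
    apply Rmult_lt_0_compat; [apply Rinv_0_lt_compat|]; lra. }
  assert (Hgt : Un_cv (pow_psum a t) (g t)) by (apply Hg; rewrite Rabs_right; nra).
  pose proof (power_series_binomial_rows a rho g t u y Hg Ht Hu Hur Hyt Hut) as Hrows.
  exists (a 0%nat - ((y + 1) * g t - y * g u)). split; [|unfold G; fold t u; ring].
  apply Un_cv_ext with
    (fun n => sum_f_R0 (fun k => t ^ k * binomial_transform (fun j => a (S j)) k) (n + 2)
              - pow_psum a t (n + 2) - / t * pow_psum a t (n + 3) + a 0%nat + / t * a 0%nat).
  { intros n. rewrite <- Hty, coef_series_partial_sum by exact Ht. reflexivity. }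
  replace (a 0%nat - ((y + 1) * g t - y * g u))
    with (y * (g u - a 0%nat) - g t - / t * g t + a 0%nat + / t * a 0%nat) by (rewrite Hty; ring).
  apply CV_plus; [apply CV_plus; [|apply Un_cv_const] | apply Un_cv_const].
  apply CV_minus; [apply CV_minus | apply CV_mult; [apply Un_cv_const |]];
    apply CV_shift'; assumption.
Qed.

(** * The limit e *)

Definition self_power_ratio (y : R) : R := exp ((y + 1) * ln (y + 1) - y * ln y).

Lemma self_power_ratio_Rpower y : 0 < y ->
  Rpower (y + 1) (y + 1) / Rpower y y = self_power_ratio y.
Proof.
  intros Hy. unfold Rpower, self_power_ratio, Rdiv, Rminus.
  rewrite exp_plus, exp_Ropp. reflexivity.
Qed.

Lemma self_power_ratio_derive c : 0 < c ->
  derivable_pt_lim self_power_ratio c (self_power_ratio c * (ln (c + 1) - ln c)).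
Proof.
  intros Hc. apply is_derive_Reals. unfold self_power_ratio.
  auto_derive; [repeat split; lra|]. unfold Rminus. field. lra.
Qed.

Lemma ln_succ_sub_bounds c : 0 < c ->
  / (c + 1) <= ln (c + 1) - ln c <= / c.
Proof.
  intros Hc. set (L := ln (c + 1) - ln c).
  assert (HeL : exp L = (c + 1) / c).
  { unfold L, Rminus. rewrite exp_plus, exp_Ropp, !exp_ln by lra. reflexivity. }
  pose proof (exp_ineq1_le L) as Hup. pose proof (exp_ineq1_le (- L)) as Hlow.
  rewrite HeL in Hup. rewrite exp_Ropp, HeL in Hlow.
  replace ((c + 1) / c) with (1 + / c) in Hup by (field; lra).
  replace (/ ((c + 1) / c)) with (1 - / (c + 1)) in Hlow by (field; lra).
  lra.
Qed.

Lemma exp_ge_e_mult z : exp 1 * z <= exp z.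
Proof.
  replace (exp z) with (exp 1 * exp (z - 1)) by (rewrite <- exp_plus; f_equal; ring).
  apply Rmult_le_compat_l; [left; apply exp_pos|].
  pose proof (exp_ineq1_le (z - 1)). lra.
Qed.

Lemma self_power_ratio_derive_near_e c : 0 < c ->
  Rabs (self_power_ratio c * (ln (c + 1) - ln c) - exp 1) <= exp 1 / c.
Proof.
  intros Hc. pose proof (ln_succ_sub_bounds c Hc) as [HL1 HL2].
  set (L := ln (c + 1) - ln c) in *.
  assert (HF : self_power_ratio c = (c + 1) * exp (c * L)).
  { replace ((c + 1) * exp (c * L)) with (exp (ln (c + 1) + c * L))
      by (rewrite exp_plus, exp_ln by lra; reflexivity).
    unfold self_power_ratio, L. f_equal. ring. }
  assert (HcL : c / (c + 1) <= c * L <= 1).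
  { split.
    - unfold Rdiv. apply Rmult_le_compat_l; lra.
    - apply Rle_trans with (c * / c); [apply Rmult_le_compat_l; lra | right; field; lra]. }
  assert (Hc1L : 1 <= (c + 1) * L <= 1 + / c).
  { split.
    - apply Rle_trans with ((c + 1) * / (c + 1)); [right; field; lra|].
      apply Rmult_le_compat_l; lra.
    - apply Rle_trans with ((c + 1) * / c); [apply Rmult_le_compat_l; lra | right; field; lra]. }
  assert (Hexp : exp 1 * (c * L) <= exp (c * L) <= exp 1).
  { split; [apply exp_ge_e_mult|].
    destruct (proj2 HcL) as [H|H]; [left; apply exp_increasing, H | rewrite H; lra]. }
  pose proof (exp_pos 1). pose proof (exp_pos (c * L)).
  rewrite HF. replace ((c + 1) * exp (c * L) * L) with (((c + 1) * L) * exp (c * L)) by ring.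
  apply Rabs_le. split.
  - apply Rle_trans with (exp 1 * (c / (c + 1)) - exp 1).
    + replace (exp 1 * (c / (c + 1)) - exp 1) with (- (exp 1 / (c + 1))) by (field; lra).
      apply Ropp_le_contravar. unfold Rdiv. apply Rmult_le_compat_l; [lra|].
      apply Rinv_le_contravar; lra.
    + apply Rplus_le_compat_r. nra.
  - apply Rle_trans with ((1 + / c) * exp 1 - exp 1); [|right; field; lra].
    apply Rplus_le_compat_r.
    apply Rle_trans with ((1 + / c) * exp (c * L)); [apply Rmult_le_compat_r; lra|].
    apply Rmult_le_compat_l; [pose proof (Rinv_0_lt_compat c Hc)|]; lra.
Qed.

Lemma self_power_difference_lim :
  lim_at_infty
    (fun y => Rpower (y + 1) (y + 1) / Rpower y y - Rpower y y / Rpower (y - 1) (y - 1))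
    (exp 1).
Proof.
  intros eps Heps. exists (2 + exp 1 / eps). intros y Hy.
  assert (He : 0 < exp 1 / eps) by (apply Rdiv_lt_0_compat; [apply exp_pos | lra]).
  rewrite self_power_ratio_Rpower by lra.
  replace (Rpower y y / Rpower (y - 1) (y - 1)) with (self_power_ratio (y - 1))
    by (rewrite <- self_power_ratio_Rpower by lra; do 2 f_equal; ring).
  destruct (MVT_cor2 self_power_ratio
              (fun c => self_power_ratio c * (ln (c + 1) - ln c)) (y - 1) y)
    as [c [Hmvt Hc]]; [lra | intros c Hc; apply self_power_ratio_derive; lra|].
  rewrite Hmvt. replace (y - (y - 1)) with 1 by ring. rewrite Rmult_1_r.
  eapply Rle_lt_trans; [apply self_power_ratio_derive_near_e; lra|].
  apply Rmult_lt_reg_r with (c / eps); [apply Rdiv_lt_0_compat; lra|].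
  replace (exp 1 / c * (c / eps)) with (exp 1 / eps) by (field; lra).
  replace (eps * (c / eps)) with c by (field; lra). lra.
Qed.

Theorem mainTheorem4 (a : nat -> R) (rho : R) (g : R -> R)
  (hrho : 0 < rho)
  (hg : forall x : R, Rabs x < rho -> infinite_sum (fun k => a k * x ^ k) (g x)) :
  (forall y : R, y > 1 + Rmax 1 (/ rho) ->
     exists S : R,
       infinite_sum (fun n => coef a (n + 2) / y ^ (n + 2)) S /\
       (y + 1) * G g y - y * G g (y - 1) = a 0%nat - S)
  /\ lim_at_infty (fun y => (y + 1) * G g y - y * G g (y - 1)) (a 0%nat)
  /\ lim_at_infty
       (fun y => Rpower (y + 1) (y + 1) / Rpower y y - Rpower y y / Rpower (y - 1) (y - 1))
       (exp 1).
Proof.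
  split; [|split].
  - exact (G_difference_series a rho g hrho hg).
  - exact (G_difference_lim a rho g hrho hg).
  - exact self_power_difference_lim.
Qed.
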